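(* Let $n\ge 2$, $\sigma,\tau\in S_n$ and $x\in\{0,1,\ldots,n-2\}$. If $x\notin\{\sigma(n-1),\ \tau^{-1}\sigma(n-1)\}$, then $(\sigma^{\sf CT})^{-1}\tau^{\sf CT}(x)=\sigma^{-1}\tau(x)$.
   Context: $S_n$ is the symmetric group on $\{0,1,\ldots,n-1\}$, with composition from left to right: $\tau\sigma(x):=\sigma(\tau(x))$; thus $\sigma^{-1}\tau(x)=\tau(\sigma^{-1}(x))$ and $\tau^{-1}\sigma(n-1)=\sigma(\tau^{-1}(n-1))$. The contraction of $\sigma\in S_n$ is $\sigma^{\sf CT}\in S_{n-1}$ (on $\{0,\ldots,n-2\}$) defined by $\sigma^{\sf CT}(x)=\sigma(n-1)$ if $x=\sigma^{-1}(n-1)$ and $\sigma^{\sf CT}(x)=\sigma(x)$ otherwise (i.e. delete $n-1$ from the cycle notation of $\sigma$). *)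

From mathcomp Require Import all_boot all_fingroup.
Set Implicit Arguments. Unset Strict Implicit. Unset Printing Implicit Defensive.

(* S_{n+1} is modelled as 'S_n.+1 = {perm 'I_n.+1}; the point "n" (= n+1-1)
   is ord_max.  MathComp's permutation product composes left to right:
   (s * t) x = t (s x)  (lemma permM), matching the paper's convention. *)

Local Open Scope group_scope.

Definition wid (n : nat) (x : 'I_n) : 'I_n.+1 := widen_ord (leqnSn n) x.

(* Auxiliary: the value of the contraction, computed in 'I_n.+1.
   For x <> s^-1(max): (tperm (s^-1 max) max * s) x = s x;
   for x = s^-1(max):   it equals s max. *)
Definition ct_val (n : nat) (s : 'S_n.+1) (x : 'I_n) : 'I_n.+1 :=
  (tperm (s^-1 ord_max) ord_max * s) (wid x).

Lemma ct_val_lt (n : nat) (s : 'S_n.+1) (x : 'I_n) : ct_val s x < n.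
Proof.
rewrite /ct_val permM.
have Hne : wid x != ord_max.
  by apply/eqP => /(congr1 val) /= Hx; move: (ltn_ord x); rewrite Hx ltnn.
case: tpermP => [Hx|Hx|H1 H2].
- have : s ord_max != ord_max.
    apply/eqP => E; move/eqP: Hne; apply; rewrite Hx -{1}E permK //.
  move=> H; have := ltn_ord (s ord_max); rewrite ltnS leq_eqVlt => /orP[/eqP E|//].
  by move: H; rewrite -(inj_eq val_inj) /= E eqxx.
- by move/eqP: Hne.
- have : s (wid x) != ord_max.
    by apply/eqP => E; apply/H1; rewrite -E permK.
  move=> H; have := ltn_ord (s (wid x)); rewrite ltnS leq_eqVlt => /orP[/eqP E|//].
  by move: H; rewrite -(inj_eq val_inj) /= E eqxx.
Qed.

Definition ct_fun (n : nat) (s : 'S_n.+1) (x : 'I_n) : 'I_n := Ordinal (ct_val_lt s x).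

Lemma ct_fun_inj (n : nat) (s : 'S_n.+1) : injective (ct_fun s).
Proof.
move=> x y /(congr1 val) /= /val_inj; rewrite /ct_val => /perm_inj.
by move/(congr1 val) => /= /val_inj.
Qed.

(* The contraction sigma^CT in S_n: delete the point n from the cycle
   notation of sigma in S_{n+1}. *)
Definition contraction (n : nat) (s : 'S_n.+1) : 'S_n := perm (@ct_fun_inj n s).

Lemma contractionE (n : nat) (s : 'S_n.+1) (x : 'I_n) :
  (contraction s x : nat) =
  if wid x == s^-1 ord_max then s ord_max else s (wid x).
Proof.
rewrite /contraction permE /= /ct_val permM.
case: eqP => [->|Hx]; first by rewrite tpermL.
rewrite tpermD // eq_sym; first by apply/eqP.
by apply/eqP => /(congr1 val) /= E; move: (ltn_ord x); rewrite E ltnn.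
Qed.

From mathcomp Require Import all_boot all_fingroup.

(* Away from the point [s^-1 (n-1)] the contraction of [s] is just [s], so
   [(s^CT)^-1] agrees with [s^-1] at every [x <> s (n-1)].  Hence
   [(s^CT)^-1 t^CT x = t^CT (s^-1 x)], which is [t (s^-1 x)] unless
   [s^-1 x = t^-1 (n-1)], i.e. unless [x = (t^-1 s) (n-1)]. *)

Lemma contraction_wid {n : nat} (s : 'S_n.+1) (x : 'I_n) :
  wid x != s^-1%g ord_max -> wid (contraction s x) = s (wid x).
Proof. by move=> hx; apply: val_inj; rewrite /= contractionE (negbTE hx). Qed.

Lemma contractionV_wid {n : nat} {s : 'S_n.+1} {x : 'I_n} :
  (x : nat) <> s ord_max -> wid ((contraction s)^-1%g x) = s^-1%g (wid x).
Proof.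
move=> hx; set y := _ x.
have hy : wid y != s^-1%g ord_max.
  apply/eqP => hy; apply: hx.
  by rewrite -[x](permKV (contraction s)) contractionE -/y hy eqxx.
by apply: (@perm_inj _ s); rewrite permKV -contraction_wid // permKV.
Qed.

Theorem lemma4p3 (n : nat) (hn : 1 <= n) (s t : 'S_n.+1) (x : 'I_n) :
  (x : nat) <> s ord_max ->
  (x : nat) <> (t^-1 * s)%g ord_max ->
  (((contraction s)^-1 * contraction t)%g x : nat) = (s^-1 * t)%g (wid x).
Proof.
move=> xNs xNts; rewrite !permM -(contractionV_wid xNs).
have yNt : wid ((contraction s)^-1%g x) != t^-1%g ord_max.
  apply/eqP; rewrite contractionV_wid // => hy; apply: xNts.
  by rewrite permM -hy permKV.
by rewrite -contraction_wid.
Qed.
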